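(* Let $\mathcal G$ be a finite connected groupoid and $\alpha=(S_g,\alpha_g)_{g\in\mathcal G}$ a unital group-type partial action of $\mathcal G$ on a commutative ring $S=\bigoplus_{y\in\mathcal G_0}S_y$, with $S_g=S1_g$ and $1_g\neq0$ for all $g$. Let $\mathcal H\in\mathrm{wSub}_\alpha(\mathcal G)$, with connected components $\mathcal H_1,\dots,\mathcal H_r$ having object sets $Y_1,\dots,Y_r$, and choose $y_j\in Y_j$. Let $T=S^{\alpha_{\mathcal H}}$, $R=S^{\alpha_{\mathcal G}}$, $T_{y_j}=S_{y_j}^{\alpha_{\mathcal H_j(y_j)}}$ and $R_{y_j}=S_{y_j}^{\alpha_{\mathcal G(y_j)}}$. Then $R\subseteq T$ is separable if and only if $R_{y_j}\subseteq T_{y_j}$ is separable for all $1\le j\le r$.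
   Context: A groupoid is a small category with all morphisms invertible; $\mathcal G_0$ is its object set (identified with identity morphisms), $s(g),t(g)$ source and target, $\mathcal G(x,y)=\{g:s(g)=x,t(g)=y\}$, $\mathcal G(x)=\mathcal G(x,x)$; $gh$ defined iff $s(g)=t(h)$; connected means all $\mathcal G(x,y)\ne\emptyset$; connected components are full subgroupoids on classes of $x\sim y\iff\mathcal G(x,y)\ne\emptyset$; wide means containing all objects. A partial action $\alpha=(S_g,\alpha_g)_{g\in\mathcal G}$ on a ring $S$: for each $g$, $S_{t(g)}$ is an ideal of $S$, $S_g$ an ideal of $S_{t(g)}$, $\alpha_g:S_{g^{-1}}\to S_g$ a ring isomorphism; $\alpha_x=\mathrm{id}_{S_x}$; for composable $(g,h)$, $\alpha_h^{-1}(S_{g^{-1}}\cap S_h)\subseteq S_{(gh)^{-1}}$ and $\alpha_g\alpha_h(a)=\alpha_{gh}(a)$ there. Unital: $S_g=S1_g$, $1_g$ central idempotent. A partial action of a connected groupoid $\mathcal K$ on $A=\bigoplus_{y\in\mathcal K_0}A_y$ is group-type if there are $x\in\mathcal K_0$ and $\tau_y\in\mathcal K(x,y)$ ($\tau_x=x$) with $A_{\tau_y^{-1}}=A_x$, $A_{\tau_y}=A_y$ for all $y$; for non-connected $\mathcal K$ it is group-type if each restriction to a connected component $\mathcal K_Y$ (acting on $\bigoplus_{y\in Y}A_y$) is group-type. For a subgroupoid $\mathcal H$, $\alpha_{\mathcal H}=(S_h,\alpha_h)_{h\in\mathcal H}$ acts on $\bigoplus_{z\in\mathcal H_0}S_z$;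 $\mathrm{wSub}_\alpha(\mathcal G)$ is the set of wide subgroupoids $\mathcal H$ with $\alpha_{\mathcal H}$ group-type. For a subgroupoid $\mathcal K$ and subring $A\subseteq S$, $A^{\alpha_{\mathcal K}}=\{a\in A:\alpha_k(a1_{k^{-1}})=a1_k\ \forall k\in\mathcal K\}$. A unital ring extension $B\subseteq C$ is separable if the multiplication $C\otimes_BC\to C$ splits as a map of $C$-bimodules, equivalently there is $e\in C\otimes_BC$ with $ce=ec$ for all $c\in C$ and $m(e)=1_C$. *)

From HB Require Import structures.
From mathcomp Require Import all_boot all_order all_algebra.
Set Implicit Arguments. Unset Strict Implicit. Unset Printing Implicit Defensive.
Import GRing.Theory.
Local Open Scope ring_scope.

(** * Finite groupoids.  Objects form a finType; [gd_id x] is the identity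
    morphism at [x]; [gd_mul g h] is the composite gh (meaningful when
    [gd_s g = gd_t h]). *)
Record groupoid := Groupoid {
  gd_mor : finType;
  gd_obj : finType;
  gd_s : gd_mor -> gd_obj;
  gd_t : gd_mor -> gd_obj;
  gd_id : gd_obj -> gd_mor;
  gd_mul : gd_mor -> gd_mor -> gd_mor;
  gd_inv : gd_mor -> gd_mor;
  gd_s_id : forall x, gd_s (gd_id x) = x;
  gd_t_id : forall x, gd_t (gd_id x) = x;
  gd_s_mul : forall g h, gd_s g = gd_t h -> gd_s (gd_mul g h) = gd_s h;
  gd_t_mul : forall g h, gd_s g = gd_t h -> gd_t (gd_mul g h) = gd_t g;
  gd_mulA : forall g h k, gd_s g = gd_t h -> gd_s h = gd_t k ->
      gd_mul (gd_mul g h) k = gd_mul g (gd_mul h k);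
  gd_mul1g : forall g, gd_mul (gd_id (gd_t g)) g = g;
  gd_mulg1 : forall g, gd_mul g (gd_id (gd_s g)) = g;
  gd_s_inv : forall g, gd_s (gd_inv g) = gd_t g;
  gd_t_inv : forall g, gd_t (gd_inv g) = gd_s g;
  gd_mulVg : forall g, gd_mul (gd_inv g) g = gd_id (gd_s g);
  gd_mulgV : forall g, gd_mul g (gd_inv g) = gd_id (gd_t g)
}.

Section Groupoids.
Variable G : groupoid.
Local Notation M := (gd_mor G).
Local Notation O := (gd_obj G).

Definition gd_connected : Prop :=
  forall x y : O, exists g : M, gd_s g = x /\ gd_t g = y.

Definition is_subgroupoid (H : {set M}) : Prop :=
  (forall g h, g \in H -> h \in H -> gd_s g = gd_t h -> gd_mul g h \in H) /\
  (forall g, g \in H -> gd_inv g \in H) /\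
  (forall g, g \in H -> gd_id (gd_s g) \in H /\ gd_id (gd_t g) \in H).

Definition is_wide (H : {set M}) : Prop := forall x : O, gd_id x \in H.

Definition H_conn (H : {set M}) (x y : O) : Prop :=
  exists h, h \in H /\ gd_s h = x /\ gd_t h = y.

End Groupoids.

Section PartialActions.
Variables (G : groupoid) (S : comPzRingType).
Local Notation M := (gd_mor G).
Local Notation O := (gd_obj G).

(** Membership in the ideal S*f generated by an idempotent f. *)
Definition in_ideal (f a : S) : Prop := a * f = a.

Definition same_ideal (f f' : S) : Prop := forall a, in_ideal f a <-> in_ideal f' a.

(** Unital partial action alpha = (S_g, alpha_g) with S_g = S 1_g, where
    [e g] = 1_g and [alpha g] is alpha_g : S_{g^-1} -> S_g (its values outside
    S_{g^-1} are irrelevant), on S = (+)_{y in G_0} S_y with S_y = S_{id_y}. *)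
Definition unital_partial_action (e : M -> S) (alpha : M -> S -> S) : Prop :=
  (* S = direct sum of the ideals S_y *)
      (forall x y : O, x != y -> e (gd_id x) * e (gd_id y) = 0) /\
      \sum_(y : O) e (gd_id y) = 1 /\
      (* 1_g central idempotent, S_g ideal of S_{t(g)} *)
      (forall g, e g * e g = e g) /\
      (forall g, in_ideal (e (gd_id (gd_t g))) (e g)) /\
      (* alpha_g : S_{g^-1} -> S_g is a ring isomorphism *)
      (forall g a, in_ideal (e (gd_inv g)) a -> in_ideal (e g) (alpha g a)) /\
      (forall g a b, in_ideal (e (gd_inv g)) a -> in_ideal (e (gd_inv g)) b ->
          alpha g (a + b) = alpha g a + alpha g b /\
          alpha g (a * b) = alpha g a * alpha g b) /\
      (forall g a b, in_ideal (e (gd_inv g)) a -> in_ideal (e (gd_inv g)) b ->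
          alpha g a = alpha g b -> a = b) /\
      (forall g c, in_ideal (e g) c -> exists2 a, in_ideal (e (gd_inv g)) a & alpha g a = c) /\
      (forall x a, in_ideal (e (gd_id x)) a -> alpha (gd_id x) a = a) /\
      (forall g h a, gd_s g = gd_t h -> in_ideal (e (gd_inv h)) a ->
          in_ideal (e (gd_inv g)) (alpha h a) ->
          in_ideal (e (gd_inv (gd_mul g h))) a /\
          alpha g (alpha h a) = alpha (gd_mul g h) a).

Definition group_type_component (e : M -> S) (K : {set M}) (x0 : O) : Prop :=
  exists x : O, exists tau : O -> M,
    H_conn K x x0 /\ tau x = gd_id x /\
    forall y, H_conn K y x0 ->
      [/\ tau y \in K, gd_s (tau y) = x, gd_t (tau y) = y,
          same_ideal (e (gd_inv (tau y))) (e (gd_id x)) &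
          same_ideal (e (tau y)) (e (gd_id y))].

Definition group_type (e : M -> S) (K : {set M}) : Prop :=
  forall x0 : O, group_type_component e K x0.

Definition wSub (e : M -> S) (H : {set M}) : Prop :=
  [/\ is_subgroupoid H, is_wide H & group_type e H].

Definition invariants (e : M -> S) (alpha : M -> S -> S) (A : S -> Prop)
    (K : {set M}) (a : S) : Prop :=
  A a /\ forall k, k \in K -> alpha k (a * e (gd_inv k)) = a * e k.

Definition isotropy (K : {set M}) (y : O) : {set M} :=
  [set k in K | (gd_s k == y) && (gd_t k == y)].

End PartialActions.

(** * Separable extensions B ⊆ C of subrings of a ring S (given as predicates,
    C having identity [one]).  Equality in C ⊗_B C of two finite sums of simple
    tensors is expressed by the universal property of the tensor product: they
    agree under every B-balanced biadditive map on C × C into an abelian group. *)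
Section Separable.
Variable S : pzRingType.

Definition balanced (B C : S -> Prop) (Mz : zmodType) (f : S -> S -> Mz) : Prop :=
  [/\ (forall a a' c, C a -> C a' -> C c -> f (a + a') c = f a c + f a' c),
      (forall a c c', C a -> C c -> C c' -> f a (c + c') = f a c + f a c') &
      (forall a b c, C a -> B b -> C c -> f (a * b) c = f a (b * c))].

Definition tensor_eq (B C : S -> Prop) (l1 l2 : seq (S * S)) : Prop :=
  forall (Mz : zmodType) (f : S -> S -> Mz), balanced B C f ->
    \sum_(p <- l1) f p.1 p.2 = \sum_(p <- l2) f p.1 p.2.

(** B ⊆ C separable: there is e = sum_i x_i ⊗ y_i in C ⊗_B C with
    c e = e c for all c in C and m(e) = 1_C. *)
Definition separable_ext (B C : S -> Prop) (one : S) : Prop :=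
  exists l : seq (S * S),
    [/\ (forall p, p \in l -> C p.1 /\ C p.2),
        \sum_(p <- l) p.1 * p.2 = one &
        forall c, C c ->
          tensor_eq B C [seq (c * p.1, p.2) | p <- l] [seq (p.1, p.2 * c) | p <- l]].

End Separable.

From mathcomp Require Import all_boot all_order all_algebra.
From Stdlib Require Import IndefiniteDescription.
Set Implicit Arguments. Unset Strict Implicit. Unset Printing Implicit Defensive.
Import GRing.Theory.
Local Open Scope ring_scope.

(* Decompose along S = (+)_y S_y.  On the component of H containing y, a full
   transversal (tau_z : y -> z in H with S_(tau_z^-1) = S_y and S_(tau_z) = S_z,
   provided by the group-type hypothesis) yields the ring map
   lift b = sum_z alpha_(tau_z) (b 1_y), which sends H(y)-invariants of S_y to
   H-invariants and is undone by multiplication with 1_y.  Multiplying by 1_y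
   turns a separability idempotent of R <= T into one of R_y <= T_y; conversely
   the lifts of separability idempotents of the R_(y_j) <= T_(y_j) add up to one
   of R <= T, since the lifts of the 1_(y_j) add up to 1.  Tensor equalities
   transfer because composing a balanced map with either operation is balanced. *)

Section GroupoidTheory.
Variable G : groupoid.
Implicit Types (g h k : gd_mor G) (x y z : gd_obj G) (K : {set gd_mor G}).
Local Notation s := (@gd_s G).
Local Notation t := (@gd_t G).
Local Notation ginv := (@gd_inv G).
Local Notation gmul := (@gd_mul G).

Lemma gd_invK g : ginv (ginv g) = g.
Proof.
have E := gd_mulA (gd_s_inv (ginv g)) (gd_s_inv g).
rewrite gd_mulVg gd_s_inv gd_mul1g gd_mulVg in E.
by rewrite {2}E -[s g]gd_t_inv -gd_s_inv gd_mulg1.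
Qed.

Lemma gd_mulKg g h : s g = t h -> gmul (ginv g) (gmul g h) = h.
Proof. by move=> E; rewrite -gd_mulA ?gd_s_inv // gd_mulVg E gd_mul1g. Qed.

Lemma gd_mulgK g h : s g = t h -> gmul (gmul g h) (ginv h) = g.
Proof. by move=> E; rewrite gd_mulA ?gd_t_inv // gd_mulgV -E gd_mulg1. Qed.

Lemma gd_invM g h : s g = t h -> ginv (gmul g h) = gmul (ginv h) (ginv g).
Proof.
move=> E.
have EV : s (ginv h) = t (ginv g) by rewrite gd_s_inv gd_t_inv.
have EMV : s (gmul g h) = t (gmul (ginv h) (ginv g)) by rewrite gd_s_mul // gd_t_mul // gd_t_inv.
have mulMV : gmul (gmul g h) (gmul (ginv h) (ginv g)) = gd_id (t g).
  rewrite (gd_mulA E); last by rewrite gd_t_mul // gd_t_inv.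
  rewrite -(gd_mulA (esym (gd_t_inv h)) EV) gd_mulgV -E -(gd_t_inv g) gd_mul1g.
  exact: gd_mulgV.
by rewrite -[RHS](gd_mulKg EMV) mulMV -(gd_t_mul E) -gd_s_inv gd_mulg1.
Qed.

Lemma H_conn_refl K x : gd_id x \in K -> H_conn K x x.
Proof. by exists (gd_id x); rewrite gd_s_id gd_t_id. Qed.

Section Subgroupoid.
Variable K : {set gd_mor G}.
Hypothesis sgK : is_subgroupoid K.

Lemma subgroupoidM g h : g \in K -> h \in K -> s g = t h -> gmul g h \in K.
Proof. by case: sgK => KM _; apply: KM. Qed.

Lemma subgroupoidV g : g \in K -> ginv g \in K.
Proof. by case: sgK => _ [KV _]; apply: KV. Qed.

Lemma H_conn_sym x y : H_conn K x y -> H_conn K y x.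
Proof. by case=> h [hK [<- <-]]; exists (ginv h); rewrite subgroupoidV ?gd_s_inv ?gd_t_inv. Qed.

Lemma H_conn_trans x y z : H_conn K x y -> H_conn K y z -> H_conn K x z.
Proof.
case=> h1 [h1K [<- E1]] [h2 [h2K [E2 <-]]].
have E : s h2 = t h1 by rewrite E1 E2.
by exists (gmul h2 h1); rewrite subgroupoidM ?gd_s_mul ?gd_t_mul.
Qed.

End Subgroupoid.

Lemma subgroupoidT : is_subgroupoid [set: gd_mor G].
Proof. by split; [|split] => *; rewrite ?inE. Qed.

Definition component K x : {set gd_obj G} :=
  [set z | [exists h in K, (s h == z) && (t h == x)]].

Lemma componentP K x z : reflect (H_conn K z x) (z \in component K x).
Proof.
rewrite inE; apply: (iffP existsP) => [[h /and3P [hK /eqP hs /eqP ht]]|[h [hK [hs ht]]]].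
  by exists h.
by exists h; rewrite hK hs ht !eqxx.
Qed.

Lemma mem_component_st K x k : is_subgroupoid K -> k \in K ->
  (s k \in component K x) = (t k \in component K x).
Proof.
move=> sgK kK; have kst : H_conn K (s k) (t k) by exists k.
apply/componentP/componentP => [|tk]; first exact/H_conn_trans/(H_conn_sym sgK).
exact: H_conn_trans tk.
Qed.

Lemma sum_components (V : nmodType) K (Y : {set gd_obj G}) (F : gd_obj G -> V) :
    is_subgroupoid K ->
    (forall x, exists y, y \in Y /\ H_conn K x y) ->
    (forall y1 y2, y1 \in Y -> y2 \in Y -> H_conn K y1 y2 -> y1 = y2) ->
  \sum_(y in Y) \sum_(z in component K y) F z = \sum_z F z.
Proof.
move=> sgK cover uniqY.
under eq_bigr do rewrite big_mkcond /=.
rewrite exchange_big; apply: eq_bigr => z _; rewrite -big_mkcondr /=.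
have [y0 [Yy0 zy0]] := cover z.
rewrite (big_pred1 y0) // => y /=; apply/andP/eqP => [[Yy /componentP zy]|->].
  exact/uniqY/(H_conn_trans sgK (H_conn_sym sgK zy)).
by split; last exact/componentP.
Qed.

End GroupoidTheory.

Section Separable.
Variable S : pzRingType.
Implicit Types (B C : S -> Prop) (l : seq (S * S)).

(* The body of [separable_ext]: [separable_ext B C one] is convertible to
   [exists l, separability_idempotent B C one l]. *)
Definition separability_idempotent B C (one : S) l : Prop :=
  [/\ (forall p, p \in l -> C p.1 /\ C p.2),
      \sum_(p <- l) p.1 * p.2 = one &
      forall c, C c -> tensor_eq B C [seq (c * p.1, p.2) | p <- l] [seq (p.1, p.2 * c) | p <- l]].

Lemma tensor_eq_map B C B' C' (phi : S -> S) l (F1 F2 G1 G2 : S * S -> S * S) :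
    (forall (Mz : zmodType) (f : S -> S -> Mz),
       balanced B' C' f -> balanced B C (fun a b => f (phi a) (phi b))) ->
    {in l, forall p, G1 p = (phi (F1 p).1, phi (F1 p).2)} ->
    {in l, forall p, G2 p = (phi (F2 p).1, phi (F2 p).2)} ->
  tensor_eq B C (map F1 l) (map F2 l) -> tensor_eq B' C' (map G1 l) (map G2 l).
Proof.
move=> hphi h1 h2 E Mz f hf; have := E Mz _ (hphi Mz f hf); rewrite !big_map => E'.
rewrite (eq_big_seq (fun p => f (phi (F1 p).1) (phi (F1 p).2))) => [|p /h1 -> //].
by rewrite E'; apply: eq_big_seq => p /h2 ->.
Qed.

Lemma tensor_eq_flatten (I : eqType) B C (r : seq I) (l1 l2 : I -> seq (S * S)) :
    {in r, forall i, tensor_eq B C (l1 i) (l2 i)} ->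
  tensor_eq B C (flatten (map l1 r)) (flatten (map l2 r)).
Proof.
move=> E Mz f hf; rewrite !big_flatten !big_map.
by apply: eq_big_seq => i /E ->.
Qed.

End Separable.

Lemma same_ideal_idem_eq (R : comPzRingType) (f f' : R) :
  f * f = f -> f' * f' = f' -> same_ideal f f' -> f = f'.
Proof.
move=> idf idf' ff'.
have ef : f * f' = f by apply/(ff' f).1.
have ef' : f' * f = f' by apply/(ff' f').2.
by rewrite -ef mulrC ef'.
Qed.

Section PartialAction.
Variables (G : groupoid) (S : comPzRingType).
Variables (e : gd_mor G -> S) (alpha : gd_mor G -> S -> S).
Hypothesis upa : unital_partial_action e alpha.
Implicit Types (g h k m : gd_mor G) (x y z w : gd_obj G) (a b c : S).
Local Notation s := (@gd_s G).
Local Notation t := (@gd_t G).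
Local Notation ginv := (@gd_inv G).
Local Notation gmul := (@gd_mul G).
Local Notation one x := (e (gd_id x)).

Lemma e_id_orth x y : x != y -> one x * one y = 0.
Proof. by case: upa => orth _; apply: orth. Qed.

Lemma sum_e_id : \sum_y one y = 1.
Proof. by case: upa => _ [sum1 _]. Qed.

Lemma e_idem g : e g * e g = e g.
Proof. by case: upa => _ [_ [idem _]]; apply: idem. Qed.

Lemma e_le_t g : e g * one (t g) = e g.
Proof. by case: upa => _ [_ [_ [le_t _]]]; apply: le_t. Qed.

Lemma alpha_into g a : a * e (ginv g) = a -> alpha g a * e g = alpha g a.
Proof. by case: upa => _ [_ [_ [_ [into _]]]]; apply: into. Qed.

Lemma alphaD g a b : a * e (ginv g) = a -> b * e (ginv g) = b ->
  alpha g (a + b) = alpha g a + alpha g b.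
Proof. by case: upa => _ [_ [_ [_ [_ [hM _]]]]] ha hb; case: (hM g a b ha hb). Qed.

Lemma alphaM g a b : a * e (ginv g) = a -> b * e (ginv g) = b ->
  alpha g (a * b) = alpha g a * alpha g b.
Proof. by case: upa => _ [_ [_ [_ [_ [hM _]]]]] ha hb; case: (hM g a b ha hb). Qed.

Lemma alpha_onto g c : c * e g = c -> exists2 a, a * e (ginv g) = a & alpha g a = c.
Proof. by case: upa => _ [_ [_ [_ [_ [_ [_ [onto _]]]]]]]; apply: onto. Qed.

Lemma alpha_id x a : a * one x = a -> alpha (gd_id x) a = a.
Proof. by case: upa => _ [_ [_ [_ [_ [_ [_ [_ [unit _]]]]]]]]; apply: unit. Qed.

Lemma alpha_comp g h a : s g = t h -> a * e (ginv h) = a ->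
    alpha h a * e (ginv g) = alpha h a ->
  a * e (ginv (gmul g h)) = a /\ alpha g (alpha h a) = alpha (gmul g h) a.
Proof. by case: upa => _ [_ [_ [_ [_ [_ [_ [_ [_ comp]]]]]]]]; apply: comp. Qed.

Lemma e_inv_le_s g : e (ginv g) * one (s g) = e (ginv g).
Proof. by rewrite -gd_t_inv e_le_t. Qed.

Lemma in_ideal_t g a : a * e g = a -> a * one (t g) = a.
Proof. by move=> ha; rewrite -{1}ha -mulrA e_le_t ha. Qed.

Lemma alpha0 g : alpha g 0 = 0.
Proof.
have := @alphaD g 0 0 (mul0r _) (mul0r _).
rewrite addr0 => h; apply: (@addrI _ (alpha g 0)); by rewrite addr0 -h.
Qed.

Lemma alpha_e_inv g : alpha g (e (ginv g)) = e g.
Proof.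
have [a ha ea] := alpha_onto (e_idem g).
have := @alphaM g (e (ginv g)) a (e_idem _) ha.
by rewrite mulrC ha ea alpha_into ?e_idem.
Qed.

Lemma alpha_invK g a : a * e g = a -> alpha g (alpha (ginv g) a) = a.
Proof.
move=> ha; have ha' : a * e (ginv (ginv g)) = a by rewrite gd_invK.
have [_ ->] := alpha_comp (esym (gd_t_inv g)) ha' (alpha_into ha').
by rewrite gd_mulgV alpha_id // in_ideal_t.
Qed.

Definition full g := e (ginv g) = one (s g) /\ e g = one (t g).

Lemma full_inv g : full g -> full (ginv g).
Proof. by case=> hV h; split; rewrite ?gd_invK ?gd_s_inv ?gd_t_inv. Qed.

Lemma e_mul_full m g : full g -> s m = t g -> e (gmul m g) = e m.
Proof.
have e_le_mul m' g' : full g' -> s m' = t g' -> e m' * e (gmul m' g') = e m'.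
  move=> [_ hg] E.
  have hm : e (ginv m') * e g' = e (ginv m') by rewrite hg -E e_inv_le_s.
  set a := alpha (ginv g') (e (ginv m')).
  have ha : a * e (ginv g') = a by apply: alpha_into; rewrite gd_invK.
  have hga : alpha g' a = e (ginv m') by apply: alpha_invK.
  have hb : alpha g' a * e (ginv m') = alpha g' a by rewrite hga e_idem.
  have [ha' comp] := alpha_comp E ha hb.
  by rewrite -(alpha_e_inv m') -hga comp alpha_into.
move=> fg E; have Em : s (gmul m g) = t (ginv g) by rewrite gd_s_mul // gd_t_inv.
have := e_le_mul _ _ (full_inv fg) Em; rewrite gd_mulgK // => <-.
by rewrite mulrC e_le_mul.
Qed.

Lemma e_full_mul g m : full g -> s g = t m -> e (gmul g m) = alpha g (e m).
Proof.
move=> fg E.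
have Ei : s (ginv m) = t (ginv g) by rewrite gd_s_inv gd_t_inv E.
rewrite -alpha_e_inv gd_invM // (e_mul_full (full_inv fg) Ei).
have hm : alpha m (e (ginv m)) * e (ginv g) = alpha m (e (ginv m)).
  by rewrite alpha_e_inv (proj1 fg) E e_le_t.
have [_ <-] := alpha_comp E (e_idem _) hm.
by rewrite alpha_e_inv.
Qed.

Lemma e_conj_full k t1 t2 : full t1 -> full t2 -> t t1 = s k -> t t2 = t k ->
  e (gmul (ginv t2) (gmul k t1)) = alpha (ginv t2) (e k).
Proof.
move=> f1 f2 E1 E2.
rewrite e_full_mul ?e_mul_full ?gd_s_inv ?gd_t_mul //; exact: full_inv.
Qed.

Lemma alpha_conj_full k t1 t2 b :
    full t1 -> full t2 -> s t1 = s t2 -> t t1 = s k -> t t2 = t k ->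
    b * one (s t1) = b ->
  let h := gmul (ginv t2) (gmul k t1) in
  alpha k (alpha t1 b * e (ginv k)) = alpha t2 (alpha h (b * e (ginv h))).
Proof.
move=> f1 f2 Es E1 E2 hb h.
have Eh : s (ginv t2) = t (gmul k t1) by rewrite gd_s_inv gd_t_mul.
have hs : s h = s t1 by rewrite !gd_s_mul.
have ht : t h = s t1 by rewrite gd_t_mul // gd_t_inv.
have ehV : e (ginv h) = alpha (ginv t1) (e (ginv k)).
  have Ek : s (ginv t1) = t (ginv k) by rewrite gd_s_inv gd_t_inv.
  have Ekt : s (gmul (ginv t1) (ginv k)) = t t2 by rewrite gd_s_mul // gd_s_inv.
  by rewrite /h !gd_invM // gd_invK (e_mul_full f2 Ekt) e_full_mul //; exact: full_inv.
set c := e (ginv h).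
have bt1 : b * e (ginv t1) = b by rewrite (proj1 f1).
have ct1 : c * e (ginv t1) = c by rewrite (proj1 f1) -hs e_inv_le_s.
have bc1 : b * c * e (ginv t1) = b * c by rewrite -mulrA ct1.
have SA : alpha t1 b * e (ginv k) = alpha t1 (b * c).
  by rewrite alphaM // /c ehV alpha_invK // (proj2 f1) E1 e_inv_le_s.
have bc2 : alpha t1 (b * c) * e (ginv k) = alpha t1 (b * c) by rewrite -SA -mulrA e_idem.
have Eth : s t2 = t h by rewrite ht Es.
have bch : b * c * e (ginv h) = b * c by rewrite -mulrA e_idem.
have bch2 : alpha h (b * c) * e (ginv t2) = alpha h (b * c).
  by rewrite (proj1 f2) -Es -ht; apply/in_ideal_t/alpha_into.
have Ekt : gmul k t1 = gmul t2 h by rewrite /h -{1}(gd_invK t2) gd_mulKg.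
by rewrite SA (proj2 (alpha_comp (esym E1) bc1 bc2)) Ekt -(proj2 (alpha_comp Eth bch bch2)).
Qed.

Lemma alpha_conj_invariant k t1 t2 b :
    full t1 -> full t2 -> s t1 = s t2 -> t t1 = s k -> t t2 = t k ->
    b * one (s t1) = b ->
  let h := gmul (ginv t2) (gmul k t1) in
  alpha h (b * e (ginv h)) = b * e h ->
  alpha k (alpha t1 b * e (ginv k)) = alpha t2 b * e k.
Proof.
move=> f1 f2 Es E1 E2 hb h hinv.
have bt2 : b * e (ginv t2) = b by rewrite (proj1 f2) -Es.
have ek : e k * e t2 = e k by rewrite (proj2 f2) E2 e_le_t.
have eh : e h * e (ginv t2) = e h by rewrite /h e_conj_full // alpha_into // gd_invK.
by rewrite (alpha_conj_full f1 f2) // -/h hinv alphaM // e_conj_full // alpha_invK.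
Qed.

Lemma e_id_ext a b : (forall w, a * one w = b * one w) -> a = b.
Proof. by move=> h; rewrite -(mulr1 a) -(mulr1 b) -sum_e_id !mulr_sumr; apply: eq_bigr. Qed.

Lemma e_idM w a b : a * b * one w = (a * one w) * (b * one w).
Proof. by rewrite mulrACA e_idem. Qed.

Lemma full_of_same_ideal g :
  same_ideal (e (ginv g)) (one (s g)) -> same_ideal (e g) (one (t g)) -> full g.
Proof. by move=> hV h; split; apply: same_ideal_idem_eq; rewrite ?e_idem. Qed.

Definition full_transversal K x (tau : gd_obj G -> gd_mor G) : Prop :=
  tau x = gd_id x /\ forall z, z \in component K x ->
    [/\ tau z \in K, s (tau z) = x, t (tau z) = z & full (tau z)].

Lemma exists_full_transversal K x : is_subgroupoid K -> gd_id x \in K ->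
  group_type_component e K x -> exists tau, full_transversal K x tau.
Proof.
move=> sgK Kx [x0 [tau0 [_ [_ htau0]]]].
have tau0P z : H_conn K z x ->
    [/\ tau0 z \in K, s (tau0 z) = x0, t (tau0 z) = z & full (tau0 z)].
  by case/htau0 => zK zs zt hV h; split=> //; apply: full_of_same_ideal; rewrite ?zs ?zt.
have [xK xs xt fx] := tau0P x (H_conn_refl Kx).
exists (fun z => gmul (tau0 z) (ginv (tau0 x))); split; first by rewrite gd_mulgV xt.
move=> z /componentP /tau0P [zK zs zt fz].
have E : s (tau0 z) = t (ginv (tau0 x)) by rewrite gd_t_inv zs xs.
split; rewrite ?gd_s_mul ?gd_t_mul ?gd_s_inv //; first by rewrite subgroupoidM ?subgroupoidV.
split; last by rewrite (e_mul_full (full_inv fx) E) gd_t_mul // (proj2 fz).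
have E' : s (tau0 x) = t (ginv (tau0 z)) by rewrite gd_t_inv zs xs.
by rewrite gd_invM // gd_invK (e_mul_full (full_inv fz) E') (proj2 fx) gd_s_mul // gd_s_inv.
Qed.

Lemma invariants_restrict A K y a : invariants e alpha A K a ->
  invariants e alpha (in_ideal (one y)) (isotropy K y) (a * one y).
Proof.
case=> _ ha; split; first by rewrite /in_ideal -mulrA e_idem.
move=> k; rewrite inE => /and3P [kK /eqP ks /eqP kt].
by rewrite -!mulrA [one y * e (ginv k)]mulrC [one y * e k]mulrC -{1}ks -{1}kt e_inv_le_s e_le_t ha.
Qed.

Lemma invariants_sub A (K K' : {set gd_mor G}) a : K \subset K' ->
  invariants e alpha A K' a -> invariants e alpha (fun _ => True) K a.
Proof. by move=> /subsetP sKK' [_ ha]; split=> // k /sKK'; apply: ha. Qed.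

Section Lift.
Variables (K : {set gd_mor G}) (x : gd_obj G) (tau : gd_obj G -> gd_mor G).
Hypotheses (sgK : is_subgroupoid K) (Kx : gd_id x \in K).
Hypothesis tauP : full_transversal K x tau.

Definition lift b := \sum_(z in component K x) alpha (tau z) (b * one x).

Lemma lift_dom b z : z \in component K x -> b * one x * e (ginv (tau z)) = b * one x.
Proof. by case/tauP.2 => _ zs _ [-> _]; rewrite zs -mulrA e_idem. Qed.

Lemma lift_term_e_id b z : z \in component K x ->
  alpha (tau z) (b * one x) * one z = alpha (tau z) (b * one x).
Proof.
move=> xz; have := alpha_into (lift_dom b xz).
by case/tauP.2: xz => _ _ zt [_ ->]; rewrite zt.
Qed.

Lemma lift_e_id b w :
  lift b * one w = if w \in component K x then alpha (tau w) (b * one x) else 0.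
Proof.
have termE z : z \in component K x ->
    alpha (tau z) (b * one x) * one w = if z == w then alpha (tau z) (b * one x) else 0.
  move=> xz; rewrite -(lift_term_e_id b xz) -mulrA.
  by case: eqP => [->|/eqP zw]; rewrite ?e_idem // e_id_orth // mulr0.
rewrite /lift mulr_suml; case: ifP => xw.
  rewrite (bigD1 w) //= termE // eqxx big1 ?addr0 // => z /andP [xz /negbTE zw].
  by rewrite termE // zw.
by rewrite big1 // => z xz; rewrite termE //; case: eqP xz => // ->; rewrite xw.
Qed.

Lemma liftD a b : lift (a + b) = lift a + lift b.
Proof. by rewrite /lift -big_split; apply: eq_bigr => z xz; rewrite mulrDl alphaD ?lift_dom. Qed.

Lemma lift0 : lift 0 = 0.
Proof. by rewrite /lift big1 // => z _; rewrite mul0r alpha0. Qed.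

Lemma liftM a b : lift (a * b) = lift a * lift b.
Proof.
apply: e_id_ext => w; rewrite [RHS]e_idM !lift_e_id; case: ifP => xw; last by rewrite mul0r.
by rewrite e_idM alphaM ?lift_dom.
Qed.

Lemma lift_proj b : lift (b * one x) = lift b.
Proof. by apply: eq_bigr => z _; rewrite -mulrA e_idem. Qed.

Lemma lift_e_base b : lift b * one x = b * one x.
Proof.
have xx : x \in component K x by apply/componentP/H_conn_refl.
by rewrite lift_e_id xx tauP.1 alpha_id // -mulrA e_idem.
Qed.

Lemma lift1 : lift (one x) = \sum_(z in component K x) one z.
Proof.
apply: eq_bigr => z xz; have [_ zs zt [fV f]] := tauP.2 z xz.
by rewrite e_idem -zs -fV alpha_e_inv f zt.
Qed.

Lemma lift_invariantM A a b : invariants e alpha A K a -> a * lift b = lift (a * b).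
Proof.
case=> _ ha; rewrite /lift mulr_sumr; apply: eq_bigr => z xz.
have [zK zs zt [fV f]] := tauP.2 z xz.
have az : a * one z = alpha (tau z) (a * one x).
  by have := ha _ zK; rewrite fV f zs zt => ->.
rewrite -(lift_term_e_id b xz) mulrCA az -alphaM ?lift_dom //.
by rewrite -e_idM [b * a]mulrC.
Qed.

Lemma lift_invariant b : b * one x = b ->
    (forall h, h \in isotropy K x -> alpha h (b * e (ginv h)) = b * e h) ->
  invariants e alpha (fun _ => True) K (lift b).
Proof.
move=> hb binv; split=> // k kK.
have -> : lift b * e (ginv k) = lift b * one (s k) * e (ginv k).
  by rewrite -mulrA [one _ * _]mulrC e_inv_le_s.
have -> : lift b * e k = lift b * one (t k) * e k by rewrite -mulrA [one _ * _]mulrC e_le_t.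
rewrite !lift_e_id -(mem_component_st x sgK kK); case: ifP => xk; last by rewrite !mul0r alpha0.
have xk' : t k \in component K x by rewrite -(mem_component_st x sgK kK).
have [K1 s1 t1 f1] := tauP.2 _ xk; have [K2 s2 t2 f2] := tauP.2 _ xk'.
rewrite hb; apply: alpha_conj_invariant; rewrite ?s1 ?s2 ?t1 ?t2 //.
have E2 : s (ginv (tau (t k))) = t (gmul k (tau (s k))) by rewrite gd_s_inv gd_t_mul.
apply: binv; rewrite inE !subgroupoidM ?subgroupoidV //=.
by rewrite !gd_s_mul // gd_t_mul // gd_t_inv s1 s2 !eqxx.
Qed.

End Lift.

Section Separability.
Variable H : {set gd_mor G}.
Hypothesis sgH : is_subgroupoid H.
Local Notation T := (invariants e alpha (fun _ => True) H).
Local Notation R := (invariants e alpha (fun _ => True) [set: gd_mor G]).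
Local Notation Ty y := (invariants e alpha (in_ideal (one y)) (isotropy H y)).
Local Notation Ry y := (invariants e alpha (in_ideal (one y)) (isotropy [set: gd_mor G] y)).

Lemma balanced_restrict y (Mz : zmodType) (f : S -> S -> Mz) :
  balanced (Ry y) (Ty y) f -> balanced R T (fun a b => f (a * one y) (b * one y)).
Proof.
have restrT b : T b -> Ty y (b * one y) := @invariants_restrict _ _ y b.
have restrR r : R r -> Ry y (r * one y) := @invariants_restrict _ _ y r.
case=> fD1 fD2 fM; split=> [a a' c ha ha' hc|a c c' ha hc hc'|a r c ha hr hc].
- by rewrite mulrDl fD1 //; apply: restrT.
- by rewrite mulrDl fD2 //; apply: restrT.
- by rewrite !e_idM fM //; [apply: restrT | apply: restrR | apply: restrT].
Qed.

Lemma separable_restrict y tau : gd_id y \in H -> full_transversal H y tau ->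
  separable_ext R T 1 -> separable_ext (Ry y) (Ty y) (one y).
Proof.
move=> Hy tauP [l [lT lsum lcomm]].
exists [seq (p.1 * one y, p.2 * one y) | p <- l]; split.
- move=> _ /mapP [p /lT [p1T p2T] ->].
  by split; [exact: (invariants_restrict y p1T) | exact: (invariants_restrict y p2T)].
- by rewrite big_map -[RHS]mul1r -lsum mulr_suml; apply: eq_bigr => p _; rewrite e_idM.
move=> c [yc cinv]; have cT := lift_invariant sgH tauP yc cinv.
rewrite -!map_comp; apply: tensor_eq_map (@balanced_restrict y) _ _ (lcomm _ cT) => p _ /=.
  by rewrite e_idM (lift_e_base Hy tauP) yc.
by rewrite [_ * lift _ _ _ c * _]e_idM (lift_e_base Hy tauP) yc.
Qed.

Lemma balanced_lift y tH tG :
    gd_id y \in H -> full_transversal H y tH -> full_transversal [set: gd_mor G] y tG ->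
  forall (Mz : zmodType) (f : S -> S -> Mz), balanced R T f ->
  balanced (Ry y) (Ty y) (fun a b => f (lift H y tH a) (lift H y tH b)).
Proof.
move=> Hy tHP tGP Mz f [fD1 fD2 fM].
have liftT b : Ty y b -> T (lift H y tH b) by case=> yb binv; apply: lift_invariant.
have liftR r : Ry y r -> R (lift [set: gd_mor G] y tG r).
  by case=> yr rinv; apply: lift_invariant; rewrite ?inE //; apply: subgroupoidT.
have liftRM r a : Ry y r -> lift H y tH (r * a) = lift [set: gd_mor G] y tG r * lift H y tH a.
  move=> Rr; have RHr := invariants_sub (subsetT H) (liftR r Rr).
  rewrite (lift_invariantM tHP a RHr) -[RHS](lift_proj H y tH) mulrAC.
  by rewrite (lift_e_base (in_setT _) tGP) Rr.1.
split=> [a a' c ha ha' hc|a c c' ha hc hc'|a r c ha hr hc].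
- by rewrite (liftD tHP) fD1 //; apply: liftT.
- by rewrite (liftD tHP) fD2 //; apply: liftT.
- by rewrite mulrC !liftRM // mulrC fM //; [apply: liftT | apply: liftR | apply: liftT].
Qed.

Lemma separable_glue (Y : {set gd_obj G}) tH tG ls :
    is_wide H ->
    (forall x, exists y, y \in Y /\ H_conn H x y) ->
    (forall y1 y2, y1 \in Y -> y2 \in Y -> H_conn H y1 y2 -> y1 = y2) ->
    (forall y, full_transversal H y (tH y)) ->
    (forall y, full_transversal [set: gd_mor G] y (tG y)) ->
    (forall y, y \in Y -> separability_idempotent (Ry y) (Ty y) (one y) (ls y)) ->
  separability_idempotent R T 1
    [seq (lift H y (tH y) p.1, lift H y (tH y) p.2) | y <- enum Y, p <- ls y].
Proof.
move=> wideH cover uniqY tHP tGP lsP.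
have liftT y b : Ty y b -> T (lift H y (tH y) b) by case=> yb binv; apply: lift_invariant.
split.
- move=> _ /allpairsPdep [y [p [Yy lp ->]]]; rewrite mem_enum in Yy.
  by have [/(_ p lp) [p1T p2T] _ _] := lsP y Yy; split; apply: liftT.
- rewrite big_allpairs_dep /= -sum_e_id -(sum_components _ sgH cover uniqY) -big_enum /=.
  apply: eq_big_seq => y; rewrite mem_enum => Yy; have [_ lsum _] := lsP y Yy.
  rewrite -(lift1 (tHP y)) -lsum (big_morph _ (liftD (tHP y)) (lift0 H y (tH y))).
  by apply: eq_bigr => p _; rewrite (liftM (tHP y)).
move=> c cT; rewrite !map_flatten -!map_comp; apply: tensor_eq_flatten => y.
rewrite mem_enum => Yy; have [_ _ lcomm] := lsP y Yy.
have LHc b : lift H y (tH y) (c * one y * b) = c * lift H y (tH y) b.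
  by rewrite mulrAC lift_proj (lift_invariantM (tHP y) b cT).
have cy := lcomm _ (invariants_restrict y cT).
rewrite /= -!map_comp.
apply: tensor_eq_map (balanced_lift (wideH y) (tHP y) (tGP y)) _ _ cy => p _ /=.
  by rewrite LHc.
by rewrite [p.2 * _]mulrC LHc mulrC.
Qed.

End Separability.

End PartialAction.

Theorem lemma5p2 (G : groupoid) (S : comPzRingType)
    (e : gd_mor G -> S) (alpha : gd_mor G -> S -> S)
    (H : {set gd_mor G}) (Yrep : {set gd_obj G}) :
  gd_connected G ->
  unital_partial_action e alpha ->
  group_type e [set: gd_mor G] ->
  (forall g, e g != 0) ->
  wSub e H ->
  (* Yrep contains exactly one object y_j of each connected component of H *)
  (forall x, exists y, y \in Yrep /\ H_conn H x y) ->
  (forall y1 y2, y1 \in Yrep -> y2 \in Yrep -> H_conn H y1 y2 -> y1 = y2) ->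
  let T := invariants e alpha (fun _ => True) H in
  let R := invariants e alpha (fun _ => True) [set: gd_mor G] in
  let Ty y := invariants e alpha (in_ideal (e (gd_id y))) (isotropy H y) in
  let Ry y := invariants e alpha (in_ideal (e (gd_id y))) (isotropy [set: gd_mor G] y) in
  separable_ext R T 1 <->
  (forall y, y \in Yrep -> separable_ext (Ry y) (Ty y) (e (gd_id y))).
Proof.
move=> _ upa GT _ [sgH wideH HT] cover uniqY T R Ty Ry.
have [tH tHP] := functional_choice _ (fun y => exists_full_transversal upa sgH (wideH y) (HT y)).
have [tG tGP] := functional_choice _
  (fun y => exists_full_transversal upa (subgroupoidT G) (in_setT (gd_id y)) (GT y)).
split=> [sepRT y _ | sepY]; first exact: (separable_restrict upa sgH (wideH y) (tHP y) sepRT).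
have lsE y : exists l, y \in Yrep -> separability_idempotent (Ry y) (Ty y) (e (gd_id y)) l.
  by case: (boolP (y \in Yrep)) => [/sepY [l lP] | Yy]; [exists l | exists [::]].
have [ls lsP] := functional_choice _ lsE.
eexists; exact: (separable_glue upa sgH wideH cover uniqY tHP tGP lsP).
Qed.
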